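(* Let $\tau$ be a primitive substitution with fixed point $X_\tau$. Then for any two non-empty prefixes $u,v$ of $X_\tau$, the return substitutions $\tau_u$ and $\tau_v$ have the same non-zero eigenvalues.
   Context: A substitution is a triple $(\tau,A,a)$: $A$ a finite alphabet, $\tau:A\to A^+$ a morphism (extended by concatenation), $a\in A$ with $\tau(a)$ starting with $a$; its fixed point $X_\tau$ is the unique sequence starting with $a$ with $\tau(X_\tau)=X_\tau$. Its matrix $M_\tau$ has $(i,j)$ entry the number of occurrences of $i$ in $\tau(j)$; eigenvalues of a substitution (or morphism $B\to B^+$) mean eigenvalues of its matrix. $\tau$ is primitive if some power of $M_\tau$ is positive; then $X_\tau$ is uniformly recurrent. For a non-empty prefix $u$ of $X_\tau$, a return word on $u$ is a factor $X_{[i,j-1]}$ where $i<j$ are successive occurrences of $u$; there are finitely many, and $X_\tau$ factors uniquely as a concatenation $m_0m_1\cdots$ of return words. Enumerating return words in order of first appearance gives a bijection $\Theta_u$ from $R_u=\{1,\dots,N\}$ to the return words, extended to an injective morphism $R_u^*\to A^*$. The return substitution on $u$ is the unique morphism $\tau_u:R_u\to R_u^+$ with $\Theta_u\tau_u=\tau\Theta_u$. *)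

From HB Require Import structures.
From mathcomp Require Import all_boot all_order all_algebra all_field.
Set Implicit Arguments. Unset Strict Implicit. Unset Printing Implicit Defensive.
Import GRing.Theory Num.Theory.
Local Open Scope ring_scope.

Definition slice (A : Type) (X : nat -> A) (p n : nat) : seq A :=
  mkseq (fun k => X (p + k)) n.

Definition occurs (A : eqType) (X : nat -> A) (u : seq A) (p : nat) : bool :=
  slice X p (size u) == u.

Definition return_at (A : eqType) (X : nat -> A) (u : seq A) (p : nat) (w : seq A) : Prop :=
  [/\ occurs X u p, (0 < size w)%N, occurs X u (p + size w),
      (forall k, (0 < k < size w)%N -> ~~ occurs X u (p + k)) &
      w = slice X p (size w)].

Definition is_return_word (A : eqType) (X : nat -> A) (u : seq A) (w : seq A) : Prop :=
  exists p, return_at X u p w.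

(* theta : R_u = 'I_N -> return words, bijective, enumerating return words
   in order of first appearance in the decomposition X = m0 m1 ... *)
Definition return_enum (A : eqType) (X : nat -> A) (u : seq A) (N : nat)
    (theta : 'I_N -> seq A) : Prop :=
  [/\ injective theta,
      (forall w, is_return_word X u w <-> exists i, theta i = w) &
      (forall i j : 'I_N, (i < j)%N ->
         exists p, return_at X u p (theta i) /\
           forall q, return_at X u q (theta j) -> (p < q)%N)].

Definition return_subst (A : Type) (N : nat) (theta : 'I_N -> seq A)
    (tau : A -> seq A) (sigma : 'I_N -> seq 'I_N) : Prop :=
  forall i, flatten (map theta (sigma i)) = flatten (map tau (theta i)).

Definition subst_matrix (A : finType) (tau : A -> seq A) : 'M[int]_#|A| :=
  \matrix_(i, j) (count_mem (enum_val i) (tau (enum_val j)))%:Z.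

Definition primitive (A : finType) (tau : A -> seq A) : Prop :=
  exists k : nat, forall i j, 0 < (subst_matrix tau ^+ k) i j.

Definition is_fixed_point (A : eqType) (tau : A -> seq A) (a : A) (X : nat -> A) : Prop :=
  X 0 = a /\
  forall n, flatten (map tau (mkseq X n)) =
            mkseq X (size (flatten (map tau (mkseq X n)))).

Definition ret_matrix (N : nat) (sigma : 'I_N -> seq 'I_N) : 'M[algC]_N :=
  \matrix_(i, j) (count_mem i (sigma j))%:R.

From HB Require Import structures.
From mathcomp Require Import all_boot all_order all_algebra all_field.
From mathcomp Require Import zify.
Import GRing.Theory Num.Theory.
Set Implicit Arguments. Unset Strict Implicit.

(* If [tau^k] maps the prefix [u] of the fixed point [X] to a word of length at
   least [|v|], then, [X] being a fixed point, [tau^k] maps every occurrence of [u]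
   to an occurrence of [v], hence every return word on [u] to a concatenation of
   return words on [v]: this gives [mu : R_u -> R_v^*] with [Theta_v mu = tau^k Theta_u],
   and symmetrically [nu] with [Theta_u nu = tau^k' Theta_v].  Since decompositions
   into return words are unique, [nu tau_v = tau_u nu] and [nu mu = tau_u^(k'+k)], so
   [M_nu M_v = M_u M_nu] and [M_nu M_mu = M_u^(k'+k)].  A left eigenvector [x] of [M_u]
   for [z <> 0] thus gives the left eigenvector [x M_nu] of [M_v], which is nonzero
   because [x M_nu M_mu = z^(k'+k) x].  Primitivity is needed only when [tau a = a],
   where it forces the alphabet to be [{a}]; otherwise [|tau^k(a)| > k]. *)

Section Slices.

Variables (A : Type) (X : nat -> A).

Lemma size_slice p n : size (slice X p n) = n.
Proof. exact: size_mkseq. Qed.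

Lemma slice0 n : slice X 0 n = mkseq X n.
Proof. exact: eq_mkseq. Qed.

Lemma slice_cat p n1 n2 :
  slice X p (n1 + n2) = slice X p n1 ++ slice X (p + n1) n2.
Proof.
rewrite /slice /mkseq iotaD map_cat add0n -[X in iota X n2]addn0 iotaDl -map_comp.
by congr (_ ++ _); apply: eq_map => k /=; congr X; lia.
Qed.

Lemma mkseq_addn p n : mkseq X (p + n) = mkseq X p ++ slice X p n.
Proof. by rewrite -!slice0 slice_cat. Qed.

Lemma take_slice p n l : l <= n -> take l (slice X p n) = slice X p l.
Proof. by move=> lln; rewrite -(subnKC lln) slice_cat take_size_cat ?size_slice. Qed.

End Slices.

Definition morph (S T : Type) (f : S -> seq T) (s : seq S) : seq T :=
  flatten (map f s).

Definition morph_comp (S T U : Type) (f : T -> seq U) (g : S -> seq T) (x : S) :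
  seq U := morph f (g x).

Lemma morph_cat (S T : Type) (f : S -> seq T) s1 s2 :
  morph f (s1 ++ s2) = morph f s1 ++ morph f s2.
Proof. by rewrite /morph map_cat flatten_cat. Qed.

Lemma morphA (S T U : Type) (f : T -> seq U) (g : S -> seq T) s :
  morph f (morph g s) = morph (morph_comp f g) s.
Proof.
elim: s => // x s IH; rewrite -cat1s !morph_cat IH.
by rewrite /morph /= !cats0.
Qed.

Lemma eq_morph (S T : Type) (f g : S -> seq T) : f =1 g -> morph f =1 morph g.
Proof. by move=> fg s; rewrite /morph (eq_map fg). Qed.

Definition morph_pow (S : Type) (s : S -> seq S) (K : nat) : S -> seq S :=
  iter K (morph_comp s) (fun x => [:: x]).

Section SubstitutionPowers.

Variables (A : Type) (tau : A -> seq A).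

Definition subst_pow (k : nat) : seq A -> seq A := iter k (morph tau).

Lemma subst_pow_cat k s t : subst_pow k (s ++ t) = subst_pow k s ++ subst_pow k t.
Proof.
by elim: k => // k IH; rewrite /subst_pow !iterS -!/(subst_pow _ _) IH morph_cat.
Qed.

Lemma subst_powD k l s : subst_pow (k + l) s = subst_pow k (subst_pow l s).
Proof. exact: iterD. Qed.

Lemma subst_pow_morph k B (th : B -> seq A) s :
  subst_pow k (morph th s) = morph (subst_pow k \o th) s.
Proof.
elim: s => [|x s IH]; first by elim: k => // k; rewrite /subst_pow iterS => ->.
by rewrite -cat1s !morph_cat subst_pow_cat IH /morph /= !cats0.
Qed.

End SubstitutionPowers.

Lemma size_subst_pow (A : eqType) (tau : A -> seq A) (Hne : forall b, tau b != [::])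
    k s :
  size s <= size (subst_pow tau k s).
Proof.
have size_morph w : size w <= size (morph tau w).
  elim: w => // b r IHr; rewrite -cat1s morph_cat !size_cat leq_add //.
  by rewrite /morph /= addn0 lt0n size_eq0 Hne.
elim: k => // k IH; apply: leq_trans IH _; rewrite /subst_pow iterS; exact: size_morph.
Qed.

Lemma subst_pow_size_gt (A : eqType) (tau : A -> seq A) (Hne : forall b, tau b != [::])
    a w :
  tau a = a :: w -> w != [::] -> forall k, k < size (subst_pow tau k [:: a]).
Proof.
move=> taua wn; elim=> // k IH.
rewrite /subst_pow iterSr -/(subst_pow tau k _).
have -> : morph tau [:: a] = [:: a] ++ w by rewrite /morph /= cats0 taua.
rewrite subst_pow_cat size_cat.
by have := size_subst_pow Hne k w; move: wn; case: w {taua} => // c r _ /=; lia.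
Qed.

Section FixedPoint.

Variables (A : eqType) (tau : A -> seq A) (a : A) (X : nat -> A).
Hypothesis Hfix : is_fixed_point tau a X.

(* [Hfix.1] cannot be used for rewriting: its [0] is the ring zero of [nat]. *)
Lemma fixed_point_head : X 0 = a.
Proof. by case: Hfix. Qed.

Lemma subst_pow_mkseq k n :
  subst_pow tau k (mkseq X n) = mkseq X (size (subst_pow tau k (mkseq X n))).
Proof.
elim: k => [|k IH]; first by rewrite /= size_mkseq.
rewrite /subst_pow iterS -/(subst_pow tau k _) IH; exact: Hfix.2.
Qed.

Lemma subst_pow_slice k p l :
  subst_pow tau k (slice X p l) =
  slice X (size (subst_pow tau k (mkseq X p))) (size (subst_pow tau k (slice X p l))).
Proof.
have := subst_pow_mkseq k (p + l).
rewrite mkseq_addn subst_pow_cat size_cat mkseq_addn.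
move/(congr1 (drop (size (subst_pow tau k (mkseq X p))))).
by rewrite !drop_size_cat ?size_mkseq.
Qed.

(* Both [tau^k(X[0,p)) tau^k(X[0,n)) = tau^k(X[0,p+n))] and [tau^k(X[0,n))] are
   prefixes of [X], so [X] repeats its prefix of length [m] at [|tau^k(X[0,p))|]. *)
Lemma occurs_subst_pow n m k p :
  occurs X (mkseq X n) p -> m <= size (subst_pow tau k (mkseq X n)) ->
  occurs X (mkseq X m) (size (subst_pow tau k (mkseq X p))).
Proof.
rewrite /occurs !size_mkseq => /eqP occ mle; apply/eqP.
have E := subst_pow_slice k p n; rewrite occ in E.
by rewrite -(take_slice _ _ mle) -E subst_pow_mkseq -!slice0 take_slice.
Qed.

End FixedPoint.

Lemma take_size_add_cat (T : Type) (w s : seq T) n :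
  take (size w + n) (w ++ s) = w ++ take n s.
Proof. by rewrite takeD take_size_cat // drop_size_cat. Qed.

Lemma slice_return_word (A : eqType) (X : nat -> A) (u : seq A) p w :
  return_at X u p w -> slice X p (size w + size u) = w ++ u.
Proof. by case=> _ _ /eqP occ _ ew; rewrite slice_cat -ew occ. Qed.

Section ReturnWords.

Variables (A : eqType) (X : nat -> A) (u : seq A) (N : nat) (th : 'I_N -> seq A).
Hypothesis Hth : return_enum X u th.

Lemma return_enum_at i : exists p, return_at X u p (th i).
Proof. by case: Hth => _ Hrw _; apply/Hrw; exists i. Qed.

Lemma size_return_word_gt0 i : 0 < size (th i).
Proof. by have [p []] := return_enum_at i. Qed.

Lemma take_coding_cat s : take (size u) (morph th s ++ u) = u.
Proof.
elim: s => [|i s IH]; first by rewrite take_size.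
have [q rq] := return_enum_at i; have [/eqP occ _ _ _ _] := rq.
rewrite /morph /= -/(morph th s) -catA -(take_takel _ (leq_addl (size (th i)) _)).
by rewrite take_size_add_cat IH -(slice_return_word rq) take_slice ?leq_addl.
Qed.

Lemma take_cat_coding_cat w s :
  take (size w + size u) (w ++ morph th s ++ u) = w ++ u.
Proof. by rewrite take_size_add_cat take_coding_cat. Qed.

(* Otherwise [u] would occur strictly inside the return word [th j]. *)
Lemma return_coding_neq_shorter i j s t :
  size (th i) < size (th j) -> th i ++ morph th s != th j ++ morph th t.
Proof.
move=> hij; apply/eqP => E.
have [q rq] := return_enum_at j; have [_ _ _ inner _] := rq.
have Wi := take_cat_coding_cat (th i) s; rewrite catA E -catA in Wi.
have occ : slice X (q + size (th i)) (size u) = u.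
  move/(congr1 (drop (size (th i)))): (slice_cat X q (size (th i)) (size u)).
  rewrite drop_size_cat ?size_slice // => <-.
  rewrite -(take_slice _ _ (_ : size (th i) + size u <= size (th j) + size u));
    last by rewrite leq_add2r ltnW.
  rewrite (slice_return_word rq) -(take_cat_coding_cat _ t).
  by rewrite take_takel ?leq_add2r 1?ltnW // Wi drop_size_cat.
have := inner (size (th i)); rewrite size_return_word_gt0 hij /occurs occ eqxx.
by move/(_ isT).
Qed.

Lemma return_coding_inj s t : morph th s = morph th t -> s = t.
Proof.
elim: s t => [|i s IH] [|j t] //.
- by move/(congr1 size); rewrite /morph /= size_cat; have := size_return_word_gt0 j; lia.
- by move/(congr1 size); rewrite /morph /= size_cat; have := size_return_word_gt0 i; lia.
rewrite /morph /= -!/(morph th _) => E.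
case: (ltngtP (size (th i)) (size (th j))) => hij.
- by move: (return_coding_neq_shorter s t hij); rewrite E eqxx.
- by move: (return_coding_neq_shorter t s hij); rewrite E eqxx.
have eij : th i = th j by rewrite -(take_size_cat (morph th s) hij) E take_size_cat.
move: E; rewrite eij => /(congr1 (drop (size (th j)))); rewrite !drop_size_cat // => /IH ->.
by case: Hth => th_inj _ _; rewrite (th_inj _ _ eij).
Qed.

Lemma return_factor_coding p l :
  occurs X u p -> occurs X u (p + l) -> exists s, morph th s = slice X p l.
Proof.
elim/ltn_ind: l p => l IH p occp occpl.
case: (posnP l) => [->|l_gt0]; first by exists [::].
pose next d := (0 < d) && occurs X u (p + d).
have next_l : next l by rewrite /next l_gt0.
have [d /andP [d_gt0 occpd] minimal] := ex_minnP (ex_intro next l next_l).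
have dl : d <= l by exact: minimal.
have [j thj] : exists j, th j = slice X p d.
  case: Hth => _ Hrw _; apply/Hrw; exists p; split; rewrite ?size_slice //.
  move=> k /andP [k_gt0 kd]; apply/negP => occpk.
  by have := minimal k; rewrite /next k_gt0 occpk leqNgt kd => /(_ isT).
have occpl' : occurs X u (p + d + (l - d)) by rewrite -addnA subnKC.
have ld : l - d < l by rewrite ltn_subrL d_gt0.
have [s Hs] := IH (l - d) ld (p + d) occpd occpl'.
by exists (j :: s); rewrite /morph /= -/(morph th s) thj Hs -slice_cat subnKC.
Qed.

End ReturnWords.

Lemma exists_return_coding (A : eqType) (tau : A -> seq A) a X
    (Hfix : is_fixed_point tau a X)
    (u v : seq A) Nu (thu : 'I_Nu -> seq A) Nv (thv : 'I_Nv -> seq A)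
    (Hthu : return_enum X u thu) (Hthv : return_enum X v thv) k :
  (forall p, occurs X u p -> occurs X v (size (subst_pow tau k (mkseq X p)))) ->
  exists mu : 'I_Nu -> seq 'I_Nv, forall i, morph thv (mu i) = subst_pow tau k (thu i).
Proof.
move=> transfer.
suff coding i : exists s : seq 'I_Nv, morph thv s == subst_pow tau k (thu i).
  by exists (fun i => xchoose (coding i)) => i; apply/eqP/(xchooseP (coding i)).
have [p [occp _ occq _ thuE]] := return_enum_at Hthu i.
have occq' := transfer _ occq; rewrite mkseq_addn subst_pow_cat size_cat -thuE in occq'.
have [s Hs] := return_factor_coding Hthv (transfer _ occp) occq'.
by exists s; apply/eqP; rewrite Hs [in RHS]thuE (subst_pow_slice Hfix) -thuE.
Qed.

Lemma subst_pow_coding (A S T : Type) (tau : A -> seq A) (th' : T -> seq A)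
    (th : S -> seq A) (mu : S -> seq T) k :
  (forall i, morph th' (mu i) = subst_pow tau k (th i)) ->
  forall s, morph th' (morph mu s) = subst_pow tau k (morph th s).
Proof. by move=> Hmu s; rewrite morphA subst_pow_morph; apply: eq_morph. Qed.

Section ReturnSubstitution.

Variables (A : Type) (tau : A -> seq A).
Variables (N : nat) (th : 'I_N -> seq A) (s : 'I_N -> seq 'I_N).
Hypothesis Hs : return_subst th tau s.

Lemma return_substE i : morph th (s i) = subst_pow tau 1 (th i).
Proof. exact: Hs. Qed.

Lemma coding_morph_pow K i : morph th (morph_pow s K i) = subst_pow tau K (th i).
Proof.
elim: K i => [|K IH] i; first by rewrite /morph /= cats0.
rewrite /morph_pow iterS -/(morph_pow s K) /morph_comp.
by rewrite (subst_pow_coding return_substE) IH -subst_powD.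
Qed.

End ReturnSubstitution.

Local Open Scope ring_scope.

Definition morph_mx (M N : nat) (f : 'I_N -> seq 'I_M) : 'M[algC]_(M, N) :=
  \matrix_(j, i) (count_mem j (f i))%:R.

Lemma ret_matrixE N (s : 'I_N -> seq 'I_N) : ret_matrix s = morph_mx s.
Proof. by []. Qed.

Lemma eq_morph_mx M N (f g : 'I_N -> seq 'I_M) : f =1 g -> morph_mx f = morph_mx g.
Proof. by move=> fg; apply/matrixP => j i; rewrite !mxE fg. Qed.

Lemma count_morph (S : finType) (T : Type) (p : pred T) (f : S -> seq T) s :
  count p (morph f s) = (\sum_x count_mem x s * count p (f x))%N.
Proof.
rewrite /morph; elim: s => [|y s IH] /=; first by rewrite big1.
rewrite count_cat IH [RHS](eq_bigr _ (fun x _ => mulnDl _ _ _)) big_split /=.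
congr (_ + _)%N; rewrite (bigD1 y) //= eqxx mul1n big1 ?addn0 // => x /negbTE.
by rewrite eq_sym => ->.
Qed.

Lemma morph_mx_comp K M N (f : 'I_M -> seq 'I_K) (g : 'I_N -> seq 'I_M) :
  morph_mx (morph_comp f g) = morph_mx f *m morph_mx g.
Proof.
apply/matrixP => j i; rewrite !mxE count_morph natr_sum.
by apply: eq_bigr => l _; rewrite !mxE natrM mulrC.
Qed.

Lemma morph_mx_pow N (s : 'I_N -> seq 'I_N) K :
  morph_mx (morph_pow s K) = morph_mx s ^+ K.
Proof.
elim: K => [|K IH].
  by apply/matrixP => j i; rewrite !mxE /= addn0 eq_sym; case: eqP.
by rewrite /morph_pow iterS morph_mx_comp -/(morph_pow s K) IH exprS mulmxE.
Qed.

Lemma eigenvalue_intertwined (F : fieldType) m n (Mu : 'M[F]_m) (Mv : 'M_n)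
    (B : 'M_(m, n)) (C : 'M_(n, m)) K z :
  B *m Mv = Mu *m B -> B *m C = Mu ^+ K -> z != 0 ->
  eigenvalue Mu z -> eigenvalue Mv z.
Proof.
move=> BMv BC z0 /eigenvalueP [x xMu x0]; apply/eigenvalueP.
exists (x *m B); first by rewrite -mulmxA BMv mulmxA xMu scalemxAl.
have xMuK : x *m Mu ^+ K = z ^+ K *: x.
  elim: K {BC} => [|K IH]; first by rewrite expr0 mulmx1 scale1r.
  by rewrite exprSr -mulmxE mulmxA IH -scalemxAl xMu scalerA exprSr.
apply/eqP => xB0; move/eqP: x0; apply; move/eqP: xMuK.
by rewrite -BC mulmxA xB0 mul0mx eq_sym scaler_eq0 expf_eq0 (negbTE z0) andbF => /eqP.
Qed.

Lemma return_eigenvalue_transfer (A : eqType) (X : nat -> A) (tau : A -> seq A)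
    (u : seq A)
    Nu (thu : 'I_Nu -> seq A) (su : 'I_Nu -> seq 'I_Nu)
    Nv (thv : 'I_Nv -> seq A) (sv : 'I_Nv -> seq 'I_Nv)
    (Hthu : return_enum X u thu) (Hsu : return_subst thu tau su)
    (Hsv : return_subst thv tau sv) k k'
    (mu : 'I_Nu -> seq 'I_Nv) (nu : 'I_Nv -> seq 'I_Nu)
    (Hmu : forall i, morph thv (mu i) = subst_pow tau k (thu i))
    (Hnu : forall j, morph thu (nu j) = subst_pow tau k' (thv j)) (z : algC) :
  z != 0 -> eigenvalue (ret_matrix su) z -> eigenvalue (ret_matrix sv) z.
Proof.
rewrite !ret_matrixE.
apply: (@eigenvalue_intertwined _ _ _ _ _ (morph_mx nu) (morph_mx mu) (k' + k)).
- rewrite -!morph_mx_comp; apply: eq_morph_mx => j; apply: (return_coding_inj Hthu).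
  rewrite /morph_comp (subst_pow_coding Hnu) (subst_pow_coding (return_substE Hsu)).
  by rewrite (return_substE Hsv) Hnu -!subst_powD addnC.
- rewrite -morph_mx_comp -morph_mx_pow; apply: eq_morph_mx => i.
  apply: (return_coding_inj Hthu).
  by rewrite /morph_comp (subst_pow_coding Hnu) Hmu (coding_morph_pow Hsu) subst_powD.
Qed.

Lemma primitive_fixed_letter (A : finType) (tau : A -> seq A) a :
  tau a = [:: a] -> primitive tau -> forall b, b = a.
Proof.
move=> taua [k Mk] b.
have col l i : (subst_matrix tau ^+ l) i (enum_rank a) = (i == enum_rank a)%:R.
  elim: l i => [|l IH] i; first by rewrite expr0 mxE; case: eqP.
  rewrite exprSr -mulmxE mxE (bigD1 (enum_rank a)) //= big1 ?addr0.
    by rewrite IH mxE enum_rankK taua /= eqxx mulr1.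
  move=> r ra; rewrite [subst_matrix _ _ _]mxE enum_rankK taua /=.
  by case: eqP => [er|]; [move: ra; rewrite er enum_valK eqxx | rewrite mulr0].
have := Mk (enum_rank b) (enum_rank a); rewrite col.
by case: eqP => [/enum_rank_inj //|_]; rewrite ltr0n.
Qed.

Lemma occurrence_transfer (A : finType) (tau : A -> seq A) (a : A) (X : nat -> A)
    (Hfix : is_fixed_point tau a X) (Hne : forall b, tau b != [::])
    (Ha : exists w, tau a = a :: w)
    (Hprim : primitive tau) n m : (0 < n)%N ->
  exists k, forall p, occurs X (mkseq X n) p ->
    occurs X (mkseq X m) (size (subst_pow tau k (mkseq X p))).
Proof.
move=> n_gt0; case: Ha => w taua; have [w0|wn] := eqVneq w [::].
  have Xa := primitive_fixed_letter (etrans taua (congr1 _ w0)) Hprim.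
  exists 0%N => p _; rewrite /occurs /slice !size_mkseq.
  by apply/eqP; apply: eq_mkseq => i; rewrite (Xa (X _)) (Xa (X i)).
exists m => p occp; apply: (occurs_subst_pow Hfix occp).
rewrite -(subnKC n_gt0) mkseq_addn subst_pow_cat size_cat /mkseq /= (fixed_point_head Hfix).
exact: ltnW (leq_trans (subst_pow_size_gt Hne taua wn m) (leq_addr _ _)).
Qed.

Unset Implicit Arguments. Set Strict Implicit.

Theorem corollary9 (A : finType) (tau : A -> seq A) (a : A) (X : nat -> A)
  (Hne : forall b, tau b != [::])
  (Ha : exists w, tau a = a :: w)
  (Hprim : primitive tau)
  (Hfix : is_fixed_point tau a X)
  (n m : nat) (Hn : (0 < n)%N) (Hm : (0 < m)%N)
  (Nu : nat) (thu : 'I_Nu -> seq A) (su : 'I_Nu -> seq 'I_Nu)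
  (Nv : nat) (thv : 'I_Nv -> seq A) (sv : 'I_Nv -> seq 'I_Nv)
  (Hthu : return_enum X (mkseq X n) thu) (Hsu : return_subst thu tau su)
  (Hthv : return_enum X (mkseq X m) thv) (Hsv : return_subst thv tau sv) :
  forall z : algC, z != 0 ->
    eigenvalue (ret_matrix su) z = eigenvalue (ret_matrix sv) z.
Proof.
move=> z z0.
have [k transfer_uv] := occurrence_transfer Hfix Hne Ha Hprim m Hn.
have [k' transfer_vu] := occurrence_transfer Hfix Hne Ha Hprim n Hm.
have [mu Hmu] := exists_return_coding Hfix Hthu Hthv transfer_uv.
have [nu Hnu] := exists_return_coding Hfix Hthv Hthu transfer_vu.
apply/idP/idP.
- exact: (return_eigenvalue_transfer Hthu Hsu Hsv Hmu Hnu z0).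
- exact: (return_eigenvalue_transfer Hthv Hsv Hsu Hnu Hmu z0).
Qed.
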